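(* There is a numerical constant $c>0$ such that for every even integer $n\ge 2$ and every $\alpha>0$: if $(\sigma_0,\dots,\sigma_{n-1})$ is a uniformly random permutation of the vector consisting of $n/2$ entries equal to $1$ and $n/2$ entries equal to $-1$, then \[ \mathbb{E}\left[\left(\sum_{i=0}^{n-1}\sigma_i(1-\alpha)^i\right)^2\right]\;\ge\;c\cdot\min\left\{1+\frac1\alpha,\ n^3\alpha^2\right\}. \] *)

From HB Require Import structures.
From mathcomp Require Import all_boot all_order all_algebra all_fingroup.
Set Implicit Arguments. Unset Strict Implicit. Unset Printing Implicit Defensive.
Import Order.TTheory GRing.Theory Num.Theory.
Local Open Scope ring_scope.

Definition balanced_vec (R : nzRingType) (n : nat) (i : 'I_n) : R :=
  if (i < n./2)%N then 1 else -1.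

(* E[(sum_i sigma_i (1-alpha)^i)^2] where sigma = v o s for s a uniformly
   random permutation in 'S_n of the balanced vector v. *)
Definition perm_energy (R : fieldType) (n : nat) (alpha : R) : R :=
  (n`!%:R)^-1 *
  \sum_(s : 'S_n) (\sum_(i < n) balanced_vec R (s i) * (1 - alpha) ^+ i) ^+ 2.

From HB Require Import structures.
From mathcomp Require Import all_boot all_order all_algebra all_fingroup.
From mathcomp Require Import ring lra.
Import Order.TTheory GRing.Theory Num.Theory.
Set Implicit Arguments. Unset Strict Implicit. Unset Printing Implicit Defensive.
Local Open Scope ring_scope.

(* Write X = sum_i sigma_i w_i.  Since sigma_i^2 = 1 and the entries of the
   balanced vector sum to 0, the correlation E[sigma_i sigma_j] equals
   -1/(n-1) for i <> j, whence (n-1) E[X^2] = n sum w_i^2 - (sum w_i)^2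
   (perm_second_moment).  This is n/(n-1) times the spread
   sum_i (w_i - mean w)^2, so E[X^2] dominates the spread
   (spread_le_perm_energy).  The spread around any point t is at least
   half the squared difference of any two weights, and hence at least
   half the sum of the squared gaps between the two halves of the index
   range (spread_ge_first_pair, spread_ge_halves).
   - If alpha >= 1, the first gap w_0 - w_1 = alpha already gives alpha^2/2.
   - If alpha < 1, with y = (1-alpha)^(n/2) the half-gaps form a geometric
     series summing to at least (1-y)^3/(2 alpha) (halves_gap_ge), and
     Bernoulli's inequality bounds 1 - y from below by
     (n/2) alpha / (1 + (n/2) alpha); a case split on (n/2) alpha <= 1
     yields the bound with c = 1/256 (small_alpha_bound). *)

Lemma half_addn n : ~~ odd n -> (n./2 + n./2)%N = n.
Proof. by move=> ev; rewrite addnn even_halfK. Qed.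

Section Correlations.
Variable R : nzRingType.

Lemma balanced_vec_sq n (k : 'I_n) : balanced_vec R k * balanced_vec R k = 1.
Proof. by rewrite /balanced_vec; case: ifP => _; rewrite ?mulrNN mulr1. Qed.

Lemma sum_balanced_vec n : ~~ odd n -> \sum_(k < n) balanced_vec R k = 0.
Proof.
move=> ev.
have -> : \sum_(k < n) balanced_vec R k =
          \sum_(0 <= j < n./2 + n./2) (if (j < n./2)%N then 1 else -1 : R).
  by rewrite half_addn // big_mkord.
rewrite (big_cat_nat (n := n./2) (leq0n _) (leq_addr _ _)) /=.
rewrite (eq_big_nat _ _ (F2 := fun _ => 1)); last by move=> j /andP[_ ->].
rewrite [X in _ + X](eq_big_nat _ _ (F2 := fun _ => -1)); last first.
  by move=> j /andP[hj _]; rewrite ltnNge hj.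
by rewrite !sumr_const_nat addnK subn0 mulNrn subrr.
Qed.

Lemma sum_balanced_vec_perm n (s : 'S_n) : ~~ odd n ->
  \sum_(j < n) balanced_vec R (s j) = 0.
Proof. by move=> ev; rewrite -[RHS](sum_balanced_vec ev) [RHS](reindex_inj (@perm_inj _ s)). Qed.

(* n! times the correlation E[sigma_i sigma_j] of two coordinates of the
   randomly permuted balanced vector. *)
Definition corr n (i j : 'I_n) : R :=
  \sum_(s : 'S_n) balanced_vec R (s i) * balanced_vec R (s j).

Lemma corr_diag n (i : 'I_n) : corr i i = n`!%:R.
Proof.
rewrite /corr (eq_bigr (fun _ => 1)) => [|s _]; last exact: balanced_vec_sq.
by rewrite sumr_const card_Sn.
Qed.

(* Composing with the transposition (j k) shows that the correlation of
   coordinate i with j does not depend on j, as long as j <> i. *)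
Lemma corr_transposition n (i j k : 'I_n) : i != j -> i != k -> corr i j = corr i k.
Proof.
move=> ij ik; rewrite /corr (reindex_inj (mulgI (tperm j k))) /=.
by apply: eq_bigr => s _; rewrite !permM tpermL tpermD // eq_sym.
Qed.

Lemma corr_row_sum n (i : 'I_n) : ~~ odd n -> \sum_j corr i j = 0.
Proof.
move=> ev; rewrite /corr exchange_big /=.
by apply: big1 => s _; rewrite -mulr_sumr sum_balanced_vec_perm // mulr0.
Qed.

Lemma corr_offdiag n (i j : 'I_n) : ~~ odd n -> i != j ->
  corr i j * (n.-1)%:R = - n`!%:R.
Proof.
move=> ev ij.
have := corr_row_sum i ev; rewrite (bigD1 i) //= corr_diag.
rewrite (eq_bigr (fun _ => corr i j)) => [|k ki]; last by apply: corr_transposition; rewrite // eq_sym.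
rewrite sumr_const cardC1 card_ord => /eqP; rewrite addrC addr_eq0 => /eqP.
by rewrite mulr_natr.
Qed.

End Correlations.

Lemma perm_second_moment (R : comNzRingType) n (w : 'I_n -> R) :
  ~~ odd n -> (0 < n)%N ->
  (n.-1)%:R * \sum_(s : 'S_n) (\sum_i balanced_vec R (s i) * w i) ^+ 2 =
  n`!%:R * (n%:R * \sum_i w i ^+ 2 - (\sum_i w i) ^+ 2).
Proof.
move=> ev n_gt0; set S := \sum_i w i.
have expand : \sum_(s : 'S_n) (\sum_i balanced_vec R (s i) * w i) ^+ 2 =
              \sum_i \sum_j w i * w j * corr R i j.
  rewrite (eq_bigr (fun s : 'S_n => \sum_i \sum_j
      (balanced_vec R (s i) * w i) * (balanced_vec R (s j) * w j))); last first.
    by move=> s _; rewrite expr2 mulr_suml; apply: eq_bigr => i _; rewrite mulr_sumr.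
  rewrite exchange_big; apply: eq_bigr => i _; rewrite exchange_big.
  by apply: eq_bigr => j _; rewrite /corr mulr_sumr; apply: eq_bigr => s _; ring.
have row i : (n.-1)%:R * \sum_j w i * w j * corr R i j =
             n`!%:R * (n%:R * w i ^+ 2 - w i * S).
  rewrite (bigD1 i) //= corr_diag mulrDr mulr_sumr.
  rewrite (eq_bigr (fun j => - (n`!%:R * (w i * w j)))) => [|j ji]; last first.
    have ij : i != j by rewrite eq_sym.
    transitivity (w i * w j * (corr R i j * (n.-1)%:R)); first by ring.
    by rewrite corr_offdiag //; ring.
  have n_succ : n%:R = (n.-1)%:R + 1 :> R by rewrite natr1 prednK.
  by rewrite sumrN -!mulr_sumr /S [in RHS](bigD1 i) //= n_succ; ring.
rewrite expand [LHS]mulr_sumr (eq_bigr _ (fun i _ => row i)) -mulr_sumr sumrB.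
by rewrite -mulr_sumr -mulr_suml expr2.
Qed.

(* E[X^2] is n/(n-1) times the spread of the weights around their mean,
   hence at least that spread. *)
Lemma spread_le_perm_energy (R : realFieldType) n (w : 'I_n -> R) :
  ~~ odd n -> (2 <= n)%N ->
  \sum_i (w i - (\sum_j w j) / n%:R) ^+ 2 <=
  (n`!%:R)^-1 * \sum_(s : 'S_n) (\sum_i balanced_vec R (s i) * w i) ^+ 2.
Proof.
move=> ev n_ge2; have n_gt0 : (0 < n)%N by apply: ltnW.
set S := \sum_j w j; set Q := \sum_i w i ^+ 2; set D := n%:R * Q - S ^+ 2.
have n_neq0 : (n%:R : R) != 0 by rewrite pnatr_eq0 -lt0n.
have pred_gt0 : (0 < n.-1)%N by rewrite -ltnS prednK.
have spread : \sum_i (w i - S / n%:R) ^+ 2 = D / n%:R.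
  rewrite (eq_bigr (fun i => w i ^+ 2 - w i * (2 * S / n%:R) + (S / n%:R) ^+ 2));
    last by move=> i _; ring.
  rewrite big_split sumrB /= -mulr_suml sumr_const card_ord -/S -/Q -mulr_natr /D.
  by field.
have energy : (n`!%:R)^-1 * \sum_(s : 'S_n) (\sum_i balanced_vec R (s i) * w i) ^+ 2
              = D / (n.-1)%:R.
  have fact_neq0 : (n`!%:R : R) != 0 by rewrite pnatr_eq0 -lt0n fact_gt0.
  have pred_neq0 : ((n.-1)%:R : R) != 0 by rewrite pnatr_eq0 -lt0n.
  apply: (mulfI pred_neq0); rewrite mulrCA (perm_second_moment w ev n_gt0) -/S -/Q -/D.
  by field; rewrite fact_neq0 pred_neq0.
have D_ge0 : 0 <= D.
  have : 0 <= D / n%:R by rewrite -spread sumr_ge0 // => i _; apply: sqr_ge0.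
  by rewrite pmulr_lge0 // invr_gt0 ltr0n.
rewrite spread energy ler_wpM2l // lef_pV2 ?posrE ?ltr0n // ler_nat.
exact: leq_pred.
Qed.

Lemma sqr_dist_le (R : realFieldType) (a b t : R) :
  (a - b) ^+ 2 / 2 <= (a - t) ^+ 2 + (b - t) ^+ 2.
Proof.
have -> : (a - t) ^+ 2 + (b - t) ^+ 2 = (a - b) ^+ 2 / 2 + (a + b - 2 * t) ^+ 2 / 2
  by field.
by rewrite lerDl divr_ge0 ?sqr_ge0.
Qed.

(* Pairing index i with i + m bounds the spread of 2m values around any t
   by the squared gaps between the two halves. *)
Lemma spread_ge_halves (R : realFieldType) (f : nat -> R) (t : R) m :
  \sum_(0 <= i < m) (f i - f (i + m)%N) ^+ 2 / 2 <= \sum_(0 <= i < m + m) (f i - t) ^+ 2.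
Proof.
rewrite (big_cat_nat (n := m) (leq0n _) (leq_addr _ _)) /=.
have -> : \sum_(m <= i < m + m) (f i - t) ^+ 2 = \sum_(0 <= i < m) (f (i + m)%N - t) ^+ 2.
  by rewrite -{1}(add0n m) big_addn addnK.
rewrite -big_split /=.
by apply: ler_sum => i _; apply: sqr_dist_le.
Qed.

Lemma spread_ge_first_pair (R : realFieldType) (f : nat -> R) (t : R) n : (2 <= n)%N ->
  (f 0%N - f 1%N) ^+ 2 / 2 <= \sum_(0 <= i < n) (f i - t) ^+ 2.
Proof.
move=> n_ge2; rewrite big_ltn ?(ltnW n_ge2) // big_ltn // addrA.
apply: le_trans (sqr_dist_le _ _ t) _.
by rewrite lerDl sumr_ge0 // => i _; apply: sqr_ge0.
Qed.

Lemma bernoulli_ineq (R : realDomainType) (a : R) m : 0 <= a -> 1 + m%:R * a <= (1 + a) ^+ m.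
Proof.
move=> a_ge0; elim: m => [|m IH]; first by rewrite mul0r addr0 expr0.
rewrite exprS -natr1.
apply: le_trans (ler_wpM2l _ IH); last by rewrite addr_ge0.
have : 0 <= m%:R * a * a by rewrite !mulr_ge0 ?ler0n.
nra.
Qed.

Lemma pow_mul_bernoulli_le1 (R : realDomainType) (a : R) m : 0 <= a -> a <= 1 ->
  (1 - a) ^+ m * (1 + m%:R * a) <= 1.
Proof.
move=> a_ge0 a_le1.
have pow_ge0 : 0 <= (1 - a) ^+ m by rewrite exprn_ge0 // subr_ge0.
apply: le_trans (ler_wpM2l pow_ge0 (bernoulli_ineq m a_ge0)) _.
by rewrite -exprMn exprn_ile1 //; nra.
Qed.

(* The squared gaps x^i - x^(i+m) = x^i (1 - x^m) form a geometric series
   of ratio x^2; its closed form, cleared of the denominator 1 - x^2. *)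
Lemma halves_gap_sum (R : comNzRingType) (x : R) m :
  (1 - x ^+ 2) * \sum_(0 <= i < m) (x ^+ i - x ^+ (i + m)) ^+ 2 =
  (1 - x ^+ m) ^+ 2 * (1 - (x ^+ m) ^+ 2).
Proof.
have geom : (1 - x ^+ 2) * \sum_(i < m) (x ^+ 2) ^+ i = 1 - (x ^+ m) ^+ 2.
  by rewrite -[RHS]opprB -exprM mulnC exprM subrX1; ring.
rewrite big_mkord -geom mulrCA; congr (_ * _).
rewrite mulr_sumr; apply: eq_bigr => i _.
by rewrite exprD -exprM mulnC exprM; ring.
Qed.

(* For the weights (1-a)^i, with 1 - (1-a)^2 <= 2a, the half-gaps sum to
   at least (1 - (1-a)^m)^3 / (2a). *)
Lemma halves_gap_ge (R : realFieldType) (a : R) m : 0 < a -> a < 1 ->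
  (1 - (1 - a) ^+ m) ^+ 3 / (2 * a) <=
  \sum_(0 <= i < m) ((1 - a) ^+ i - (1 - a) ^+ (i + m)) ^+ 2.
Proof.
move=> a_gt0 a_lt1.
have gap_sum := halves_gap_sum (1 - a) m.
set y := (1 - a) ^+ m in gap_sum *; set G := \sum_(0 <= i < m) _ in gap_sum *.
have y_ge0 : 0 <= y by rewrite exprn_ge0 // subr_ge0 ltW.
have y_le1 : y <= 1 by apply: exprn_ile1; lra.
have G_ge0 : 0 <= G by rewrite sumr_ge0 // => i _; apply: sqr_ge0.
rewrite ler_pdivrMr ?mulr_gt0 //.
apply: le_trans (_ : _ <= (1 - y) ^+ 2 * (1 - y ^+ 2)) _.
  by rewrite exprSr ler_wpM2l ?sqr_ge0 //; nra.
by rewrite -gap_sum [G * _]mulrC; apply: (ler_wpM2r G_ge0); nra.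
Qed.

(* Final estimate for alpha >= 1, where the first gap equals alpha. *)
Lemma large_alpha_bound (R : realFieldType) (a B : R) : 1 <= a ->
  (256%:R)^-1 * Num.min (1 + a^-1) B <= a ^+ 2 / 2.
Proof.
move=> a_ge1.
have inv_le1 : a^-1 <= 1 by rewrite invf_le1 //; lra.
have min_le2 : Num.min (1 + a^-1) B <= 2 by rewrite ge_min; apply/orP; left; lra.
nra.
Qed.

(* Final estimate for alpha < 1 and n = 2m, given y = (1-alpha)^m with
   y (1 + m alpha) <= 1: split according to whether m alpha <= 1. *)
Lemma small_alpha_bound (R : realFieldType) (a y : R) m : 0 < a -> a < 1 ->
  0 <= y -> y * (1 + m%:R * a) <= 1 ->
  (256%:R)^-1 * Num.min (1 + a^-1) ((m + m)%N%:R ^+ 3 * a ^+ 2) <=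
  (1 - y) ^+ 3 / (2 * a) / 2.
Proof.
move=> a_gt0 a_lt1 y_ge0 y_bern; set u := m%:R * a in y_bern *.
have u_ge0 : 0 <= u by rewrite mulr_ge0 ?ler0n ?ltW.
have gap : u <= (1 - y) * (1 + u) by nra.
have cube_mono k : 0 <= k -> k <= 1 - y ->
    k ^+ 3 / (2 * a) / 2 <= (1 - y) ^+ 3 / (2 * a) / 2.
  move=> k_ge0 k_le; rewrite !ler_pM2r ?invr_gt0 ?mulr_gt0 //.
  by apply: lerXn2r; rewrite ?nnegrE //; lra.
have c_gt0 : (0 : R) < (256%:R)^-1 by rewrite invr_gt0 ltr0n.
case: (lerP u 1) => [u_le1 | u_gt1].
- apply: le_trans (cube_mono (u / 2) _ _); [|lra|nra].
  apply: le_trans (_ : _ <= (256%:R)^-1 * ((m + m)%N%:R ^+ 3 * a ^+ 2)) _.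
    by rewrite ler_pM2l // ge_min lexx orbT.
  rewrite le_eqVlt; apply/orP; left; apply/eqP.
  by rewrite /u natrD; field; rewrite gt_eqF.
- apply: le_trans (cube_mono (1 / 2) _ _); [|lra|nra].
  apply: le_trans (_ : _ <= (256%:R)^-1 * (1 + a^-1)) _.
    by rewrite ler_pM2l // ge_min lexx.
  have inv_ge1 : 1 <= a^-1 by rewrite invf_ge1 // ltW.
  have -> : (1 / 2) ^+ 3 / (2 * a) / 2 = a^-1 / 32 by field; rewrite gt_eqF.
  lra.
Qed.

Theorem lemma1 :
  exists c : rat, 0 < c /\
    forall (R : realFieldType) (n : nat) (alpha : R),
      ~~ odd n -> (2 <= n)%N -> 0 < alpha ->
      perm_energy n alpha >=
        ratr c * Num.min (1 + alpha^-1) ((n%:R) ^+ 3 * alpha ^+ 2).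
Proof.
exists (256%:R)^-1; split; first by rewrite invr_gt0 ltr0n.
move=> R n a ev n_ge2 a_gt0; rewrite fmorphV rmorph_nat.
apply: le_trans (spread_le_perm_energy (fun i : 'I_n => (1 - a) ^+ i) ev n_ge2).
set t := _ / _.
rewrite -(big_mkord xpredT (fun i => ((1 - a) ^+ i - t) ^+ 2)).
case: (lerP 1 a) => [a_ge1 | a_lt1].
- apply: le_trans (spread_ge_first_pair _ t n_ge2).
  by rewrite expr0 expr1 subKr; apply: large_alpha_bound.
- have [m n_eq] : exists m, n = (m + m)%N by exists n./2; rewrite half_addn.
  rewrite n_eq; apply: le_trans (spread_ge_halves _ t m); rewrite -mulr_suml.
  apply: le_trans (ler_wpM2r _ (halves_gap_ge m a_gt0 a_lt1)); last first.
    by rewrite invr_ge0 ler0n.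
  apply: small_alpha_bound => //; first by rewrite exprn_ge0 // subr_ge0 ltW.
  exact: pow_mul_bernoulli_le1 (ltW a_gt0) (ltW a_lt1).
Qed.
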